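(* Any bandit-feedback learning algorithm for episodic MDPs with $k=2$ levels, horizon length $H$ and $A$ actions has expected regret $\Omega\left(\min\left\{\sqrt{ A^H T} \,,\, T\right\}\right)$ over $T$ episodes; that is, there is an absolute constant $c>0$ such that for every such algorithm there is an MDP instance with $k=2$ on which its expected regret is at least $c\min\{\sqrt{A^HT},T\}$.
   Context: An episodic MDP has states $(l,i)$ for levels $l\in[k]$ and stages $i\in[H]$, start state $(1,1)$, and action set $\mathcal{A}$ of size $A$. For $i\in[H-1]$, action $a$ at $(l,i)$ moves to $(s,i+1)$ with probability $p_i(s\mid l,a)$. Action $a$ at $(l,i)$ yields a random reward $R_{l,i}(a)\ge0$ with mean $r_{l,i}(a)$, and the total reward of any execution lies in $[0,1]$. A deterministic policy is a matrix $(\pi_{l,i})$ of actions; its value $V(\Pi)$ is its expected total reward, and $\mathsf{Opt}$ is the maximum value. Bandit-feedback learning: transitions and rewards are unknown; in each of $T$ episodes the learner chooses a policy $\pi^t$ based on past observations, executes it once, and observes only the total reward of the episode (not the visited states nor per-step rewards). Regret is $\sum_{t=1}^T(\mathsf{Opt}-V(\pi^t))$; expected regret is its expectation. *)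

From HB Require Import structures.
From mathcomp Require Import all_boot all_order all_algebra.
From mathcomp Require Import reals.
Set Implicit Arguments. Unset Strict Implicit. Unset Printing Implicit Defensive.
Import Order.TTheory GRing.Theory Num.Theory.
Local Open Scope ring_scope.

(* Episodic MDP with k = 2 levels ('I_2, ord0 = level 1), H stages ('I_H),
   A actions ('I_A).  Start state = (level ord0, stage 0).
   trans i l a s = p_i(s | l, a)   (used for i < H-1).
   rew l i a = finitely supported law of R_{l,i}(a), as a list of
   (value, probability) pairs. *)
Record mdp (R : realType) (H A : nat) := Mdp {
  trans : 'I_H -> 'I_2 -> 'I_A -> 'I_2 -> R;
  rew   : 'I_2 -> 'I_H -> 'I_A -> seq (R * R)
}.

Section Defs.
Variables (R : realType) (H A : nat).

Definition policy := {ffun 'I_2 * 'I_H -> 'I_A}.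

Definition valid_mdp (M : mdp R H A) : Prop :=
  [/\ (forall i l a s, 0 <= trans M i l a s),
      (forall i l a, \sum_(s : 'I_2) trans M i l a s = 1),
      (forall l i a, all (fun x : R * R => (0 <= x.1) && (0 <= x.2)) (rew M l i a)),
      (forall l i a, \sum_(x <- rew M l i a) x.2 = 1) &
      (forall (path : {ffun 'I_H -> 'I_2}) (acts : {ffun 'I_H -> 'I_A})
              (x : {ffun 'I_H -> R * R}),
          (forall i, x i \in rew M (path i) i (acts i)) ->
          0 <= \sum_(i : 'I_H) (x i).1 <= 1)].

(* law of a sum of two independent finitely supported variables *)
Definition conv (d1 d2 : seq (R * R)) : seq (R * R) :=
  [seq (x.1 + y.1, x.2 * y.2) | x <- d1, y <- d2].

Definition path_prob (M : mdp R H A) (pi : policy) (path : {ffun 'I_H -> 'I_2}) : R :=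
  \prod_(j : 'I_H)
     (if (j : nat) == 0%N then ((path j == ord0) : nat)%:R
      else let j' := ord_pred j in
           trans M j' (path j') (pi (path j', j')) (path j)).

Definition rew_dist (M : mdp R H A) (pi : policy) (path : {ffun 'I_H -> 'I_2}) : seq (R * R) :=
  foldr (fun i acc => conv (rew M (path i) i (pi (path i, i))) acc)
        [:: (0, 1)] (enum 'I_H).

Definition episode_dist (M : mdp R H A) (pi : policy) : seq (R * R) :=
  flatten [seq [seq (x.1, path_prob M pi path * x.2) | x <- rew_dist M pi path]
          | path <- enum {: {ffun 'I_H -> 'I_2}}].

Definition value (M : mdp R H A) (pi : policy) : R :=
  \sum_(x <- episode_dist M pi) x.1 * x.2.

Definition Opt (M : mdp R H A) : R := \big[Num.max/0]_(pi : policy) value M pi.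

(* A (possibly randomized) bandit-feedback learner: given the history of
   (policy played, observed total reward) pairs, a probability distribution
   over the next policy. *)
Definition algorithm := seq (policy * R) -> policy -> R.

Definition valid_alg (alg : algorithm) : Prop :=
  forall h, (forall pi, 0 <= alg h pi) /\ \sum_(pi : policy) alg h pi = 1.

Fixpoint exp_regret (M : mdp R H A) (alg : algorithm) (t : nat) (h : seq (policy * R)) : R :=
  match t with
  | 0 => 0
  | t'.+1 => \sum_(pi : policy) alg h pi *
              ((Opt M - value M pi) +
               \sum_(x <- episode_dist M pi) x.2 * exp_regret M alg t' (rcons h (pi, x.1)))
  end.

End Defs.

From HB Require Import structures.
From mathcomp Require Import all_boot all_order all_algebra.
From mathcomp Require Import reals.
From mathcomp Require Import ring lra.
Set Implicit Arguments. Unset Strict Implicit. Unset Printing Implicit Defensive.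
Import Order.TTheory GRing.Theory Num.Theory.
Local Open Scope ring_scope.

(* For a secret action sequence s in A^H, the MDP [needle_mdp s e] keeps the
   agent on the first level exactly as long as it plays s there, and pays a
   single Bernoulli coin at the last stage, of mean 1/2 + e if the agent is
   still on the first level and 1/2 otherwise.  Seen through the total
   reward, every policy is an arm of a Bernoulli bandit with A^H "secret
   classes" of arms, and the arms following s are the only good ones.
   Compare the expected number X_s of pulls of good arms with its value Y_s
   when every arm has mean 1/2.  Summed over histories, X_s - Y_s is
   controlled by the triangular discrimination (p - q)^2 / (p + q) between
   the history probabilities p and q, which grows by at most 32 e^2 per pull
   of a good arm, so X_s - Y_s <= 64 T e^2 Y_s + (X_s + Y_s) / 8.  Since each
   arm is good for exactly one secret, the Y_s sum to T; if T e^2 <= A^H / 512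
   some s has X_s <= 11/14 T, hence regret e (T - X_s) >= 3/14 e T, and
   e ~ min(1/4, sqrt(A^H / T)) gives the bound. *)

Lemma sum_prob_addl (R : numDomainType) (I : finType) (w f : I -> R) (k : R) :
  \sum_i w i = 1 -> \sum_i w i * (k + f i) = k + \sum_i w i * f i.
Proof.
move=> w1; rewrite -[k in RHS]mul1r -w1 mulr_suml -big_split.
by apply: eq_bigr => i _; rewrite mulrDr.
Qed.

Lemma exists_le_mean (R : realDomainType) (I : finType) (f : I -> R) (b : R) :
  (0 < #|I|)%N -> \sum_i f i <= #|I|%:R * b -> exists i, f i <= b.
Proof.
move=> /card_gt0P [i0 _] sum_le; apply/existsP; apply: contraLR sum_le.
move=> /existsPn f_gt; rewrite -ltNge.
have -> : #|I|%:R * b = \sum_(i : I) b by rewrite sumr_const mulr_natl.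
by apply: ltr_sum => [|i _]; [apply/hasP; exists i0 | rewrite ltNge f_gt].
Qed.

Section BernoulliDiscrimination.
Variable R : realType.

Definition bernoulli (m : R) (b : bool) : R := if b then m else 1 - m.

Lemma sum_bernoulli m : \sum_(b : bool) bernoulli m b = 1.
Proof. by rewrite big_bool /=; ring. Qed.

Lemma bernoulli_ge0 m b : 0 <= m <= 1 -> 0 <= bernoulli m b.
Proof. by case/andP=> m_ge0 m_le1; case: b; rewrite /= ?subr_ge0. Qed.

(* The triangular discrimination; [x / 0 = 0] gives [trid 0 0 = 0]. *)
Definition trid (x y : R) : R := (x - y) ^+ 2 / (x + y).

Lemma tridxx x : trid x x = 0.
Proof. by rewrite /trid subrr expr0n mul0r. Qed.

Lemma trid_ge0 x y : 0 <= x -> 0 <= y -> 0 <= trid x y.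
Proof. by move=> x_ge0 y_ge0; rewrite divr_ge0 ?sqr_ge0 ?addr_ge0. Qed.

Lemma trid_scale k x y : trid (k * x) (k * y) = k * trid x y.
Proof.
have [->|k_neq0] := eqVneq k 0; first by rewrite !mul0r tridxx.
rewrite /trid -mulrBr -mulrDr exprMn invfM.
have [->|xy_neq0] := eqVneq (x + y) 0; first by rewrite !invr0 !mulr0.
by rewrite expr2; field; rewrite k_neq0 xy_neq0.
Qed.

Lemma sub_le_trid p q : 0 <= p -> 0 <= q -> p - q <= 2 * trid p q + (p + q) / 8.
Proof.
move=> p_ge0 q_ge0; have [pq0|pq_neq0] := eqVneq (p + q) 0.
  have p0 : p = 0 by lra.
  have q0 : q = 0 by lra.
  by rewrite p0 q0 tridxx; lra.
have pq_gt0 : 0 < p + q by rewrite lt_neqAle eq_sym pq_neq0 addr_ge0.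
rewrite -(ler_pM2r pq_gt0) -subr_ge0.
have -> : (2 * trid p q + (p + q) / 8) * (p + q) - (p - q) * (p + q)
          = (4 * (p - q) - (p + q)) ^+ 2 / 8 by rewrite /trid; field.
by rewrite divr_ge0 ?sqr_ge0.
Qed.

Lemma trid_split p q c : 0 <= c -> 2 * c < p + q ->
  trid (p / 2 + c) (q / 2) + trid (p / 2 - c) (q / 2)
  = trid p q + 16 * c ^+ 2 * q ^+ 2 / ((p + q) * ((p + q) ^+ 2 - 4 * c ^+ 2)).
Proof.
move=> c_ge0 c_lt; rewrite /trid; field.
by rewrite !gt_eqF //; try lra; rewrite !expr2; nra.
Qed.

Lemma trid_bernoulli_step p q e : 0 <= p -> 0 <= q -> 0 <= e <= 1/4 ->
  \sum_(b : bool) trid (p * bernoulli (1/2 + e) b) (q * bernoulli (1/2) b)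
  <= trid p q + 32 * e ^+ 2 * q.
Proof.
move=> p_ge0 q_ge0 /andP[e_ge0 e_le]; rewrite big_bool /=.
have [pq0|pq_neq0] := eqVneq (p + q) 0.
  have p0 : p = 0 by lra.
  have q0 : q = 0 by lra.
  by rewrite p0 q0 !mul0r tridxx; lra.
have pq_gt0 : 0 < p + q by rewrite lt_neqAle eq_sym pq_neq0 addr_ge0.
have pe_le : p * e <= p / 4 by have := ler_wpM2l p_ge0 e_le; lra.
have -> : p * (1/2 + e) = p / 2 + p * e by field.
have -> : p * (1 - (1/2 + e)) = p / 2 - p * e by field.
have -> : q * (1 - 1/2) = q / 2 by field.
have -> : q * (1/2) = q / 2 by field.
rewrite trid_split ?mulr_ge0 //; last by lra.
have pe_ge0 : 0 <= p * e by rewrite mulr_ge0.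
have den_gt0 : 0 < (p + q) ^+ 2 - 4 * (p * e) ^+ 2.
  have lo : 0 < p + q - 2 * (p * e) by lra.
  have hi : 0 < p + q + 2 * (p * e) by lra.
  by have := mulr_gt0 lo hi; rewrite !expr2; lra.
rewrite lerD2l ler_pdivrMr ?mulr_gt0 //.
have eq_ge0 : 0 <= e ^+ 2 * q by rewrite mulr_ge0 ?sqr_ge0.
have cube : p ^+ 2 * q <= (p + q) ^+ 3 by rewrite !exprS expr0; nra.
have den : 3/4 * (p + q) ^+ 2 <= (p + q) ^+ 2 - 4 * (p * e) ^+ 2.
  by rewrite !expr2; nra.
have := ler_wpM2l eq_ge0 cube.
have := ler_wpM2l (mulr_ge0 eq_ge0 (ltW pq_gt0)) den.
rewrite !exprS expr0; nra.
Qed.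

End BernoulliDiscrimination.

Definition indic {R : pzSemiRingType} {P : Type} (S : pred P) (a : P) : R :=
  (S a : nat)%:R.

Section BernoulliBandit.
Variables (R : realType) (P : finType).

Definition needle (S : pred P) (e : R) (a : P) : R := if S a then 1/2 + e else 1/2.

Variable alg : seq (P * R) -> P -> R.
Hypothesis alg_ge0 : forall h a, 0 <= alg h a.
Hypothesis alg_sum1 : forall h, \sum_a alg h a = 1.

Fixpoint bandit_cost (mu c : P -> R) (t : nat) (h : seq (P * R)) : R :=
  if t is t'.+1 then
    \sum_a alg h a * (c a + \sum_(b : bool) bernoulli (mu a) b *
                              bandit_cost mu c t' (rcons h (a, (b : nat)%:R)))
  else 0.

Lemma eq_bandit_cost mu c1 c2 t h :
  c1 =1 c2 -> bandit_cost mu c1 t h = bandit_cost mu c2 t h.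
Proof.
move=> c12; elim: t h => [|t IH] h //=; apply: eq_bigr => a _.
by rewrite c12; under eq_bigr do rewrite IH.
Qed.

Lemma bandit_cost_affine mu c k l t h :
  bandit_cost mu (fun a => k + l * c a) t h = k * t%:R + l * bandit_cost mu c t h.
Proof.
elim: t h => [|t IH] h /=; first by rewrite !mulr0 addr0.
have step a : k + l * c a + \sum_(b : bool) bernoulli (mu a) b *
                bandit_cost mu (fun a => k + l * c a) t (rcons h (a, (b : nat)%:R))
  = k * t.+1%:R + l * (c a + \sum_(b : bool) bernoulli (mu a) b *
                bandit_cost mu c t (rcons h (a, (b : nat)%:R))).
  under eq_bigr do rewrite IH.
  rewrite sum_prob_addl ?sum_bernoulli // -natr1.
  under eq_bigr do rewrite mulrCA.
  rewrite -mulr_sumr; ring.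
under eq_bigr do rewrite step.
rewrite sum_prob_addl // mulr_sumr.
by congr (_ + _); apply: eq_bigr => a _; rewrite mulrCA.
Qed.

Lemma bandit_cost_const mu k t h : bandit_cost mu (fun=> k) t h = k * t%:R.
Proof.
elim: t h => [|t IH] h /=; first by rewrite mulr0.
under eq_bigr => a _ do under eq_bigr do rewrite IH.
under eq_bigr => a _ do rewrite -mulr_suml sum_bernoulli mul1r.
by rewrite -mulr_suml alg_sum1 mul1r -natr1; ring.
Qed.

Lemma bandit_cost_sum (C : finType) mu (F : C -> P -> R) t h :
  bandit_cost mu (fun a => \sum_c F c a) t h = \sum_c bandit_cost mu (F c) t h.
Proof.
elim: t h => [|t IH] h /=; first by rewrite big1.
rewrite exchange_big; apply: eq_bigr => a _.
rewrite -mulr_sumr big_split /=; congr (_ * (_ + _)).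
under eq_bigr do rewrite IH mulr_sumr.
by rewrite exchange_big.
Qed.

(* [p] and [q] are the probabilities of the current history under the arm
   means [mu] and [nu], and [n] counts its pulls of arms in [S]. *)
Fixpoint hist_sum (mu nu : P -> R) (S : pred P) (t : nat) (h : seq (P * R))
    (p q : R) (n : nat) (Psi : R -> R -> nat -> R) : R :=
  if t is t'.+1 then
    \sum_a \sum_(b : bool) hist_sum mu nu S t' (rcons h (a, (b : nat)%:R))
      (p * alg h a * bernoulli (mu a) b) (q * alg h a * bernoulli (nu a) b)
      (n + S a) Psi
  else Psi p q n.

Lemma hist_sum_lin mu nu S t h p q n x y Psi1 Psi2 :
  hist_sum mu nu S t h p q n (fun p q n => x * Psi1 p q n + y * Psi2 p q n)
  = x * hist_sum mu nu S t h p q n Psi1 + y * hist_sum mu nu S t h p q n Psi2.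
Proof.
elim: t h p q n => [|t IH] h p q n //=.
rewrite !mulr_sumr -big_split; apply: eq_bigr => a _ /=.
by rewrite !mulr_sumr -big_split; apply: eq_bigr => b _.
Qed.

Lemma hist_sum_swap mu nu S t h p q n Psi :
  hist_sum mu nu S t h p q n Psi = hist_sum nu mu S t h q p n (fun q p n => Psi p q n).
Proof.
elim: t h p q n => [|t IH] h p q n //=.
by apply: eq_bigr => a _; apply: eq_bigr => b _.
Qed.

Lemma ler_hist_sum mu nu S t h p q n Psi1 Psi2 :
  (forall a, 0 <= mu a <= 1) -> (forall a, 0 <= nu a <= 1) -> 0 <= p -> 0 <= q ->
  (forall p q m, 0 <= p -> 0 <= q -> (m <= n + t)%N -> Psi1 p q m <= Psi2 p q m) ->
  hist_sum mu nu S t h p q n Psi1 <= hist_sum mu nu S t h p q n Psi2.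
Proof.
move=> mu01 nu01; elim: t h p q n => [|t IH] h p q n p_ge0 q_ge0 Psi12 /=.
  by apply: Psi12; rewrite ?addn0.
apply: ler_sum => a _; apply: ler_sum => b _.
apply: IH => [||p' q' m p'_ge0 q'_ge0 m_le]; rewrite ?mulr_ge0 ?bernoulli_ge0 //.
apply: Psi12; rewrite // (leq_trans m_le) // -addnA leq_add2l.
by case: (S a) => /=; rewrite ?add0n ?leqnSn.
Qed.

Lemma hist_sum_count mu nu S t h p q n :
  hist_sum mu nu S t h p q n (fun p _ n => p * n%:R)
  = p * (n%:R + bandit_cost mu (indic S) t h).
Proof.
elim: t h p q n => [|t IH] h p q n /=; first by rewrite addr0.
have step a : \sum_(b : bool) hist_sum mu nu S t (rcons h (a, (b : nat)%:R))
      (p * alg h a * bernoulli (mu a) b) (q * alg h a * bernoulli (nu a) b)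
      (n + S a) (fun p _ n => p * n%:R)
  = p * (alg h a * (n%:R + (indic S a + \sum_(b : bool) bernoulli (mu a) b *
                           bandit_cost mu (indic S) t (rcons h (a, (b : nat)%:R))))).
  under eq_bigr do rewrite IH -mulrA.
  rewrite -mulr_sumr sum_prob_addl ?sum_bernoulli // natrD /indic.
  ring.
under eq_bigr do rewrite step.
by rewrite -mulr_sumr sum_prob_addl.
Qed.

Lemma hist_sum_count_r mu nu S t h p q n :
  hist_sum mu nu S t h p q n (fun _ q n => q * n%:R)
  = q * (n%:R + bandit_cost nu (indic S) t h).
Proof. by rewrite hist_sum_swap hist_sum_count. Qed.

Lemma hist_sum_div_le (phi : R -> R -> R) (K : R) mu nu S t h p q n :
  (forall a, 0 <= mu a <= 1) -> (forall a, 0 <= nu a <= 1) -> 0 <= K ->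
  (forall k x y, 0 <= k -> phi (k * x) (k * y) = k * phi x y) ->
  (forall p q a, 0 <= p -> 0 <= q -> \sum_(b : bool)
     phi (p * bernoulli (mu a) b) (q * bernoulli (nu a) b) <= phi p q + K * q * indic S a) ->
  0 <= p -> 0 <= q ->
  hist_sum mu nu S t h p q n (fun p q _ => phi p q)
  <= phi p q + K * q * bandit_cost nu (indic S) t h.
Proof.
move=> mu01 nu01 K_ge0 phi_scale phi_step.
elim: t h p q n => [|t IH] h p q n p_ge0 q_ge0 /=; first by rewrite mulr0 addr0.
have step a : \sum_(b : bool) hist_sum mu nu S t (rcons h (a, (b : nat)%:R))
      (p * alg h a * bernoulli (mu a) b) (q * alg h a * bernoulli (nu a) b)
      (n + S a) (fun p q _ => phi p q)
  <= alg h a * (phi p q + K * q * (indic S a + \sum_(b : bool) bernoulli (nu a) b *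
                           bandit_cost nu (indic S) t (rcons h (a, (b : nat)%:R)))).
  apply: (@le_trans _ _ (\sum_(b : bool)
      (phi (p * alg h a * bernoulli (mu a) b) (q * alg h a * bernoulli (nu a) b)
       + K * (q * alg h a * bernoulli (nu a) b) *
         bandit_cost nu (indic S) t (rcons h (a, (b : nat)%:R))))).
    by apply: ler_sum => b _; apply: IH; rewrite ?mulr_ge0 ?bernoulli_ge0.
  rewrite big_split /=.
  under eq_bigr do rewrite [p * _]mulrC [q * _]mulrC -!mulrA phi_scale //.
  have -> : \sum_(b : bool) K * (q * alg h a * bernoulli (nu a) b) *
              bandit_cost nu (indic S) t (rcons h (a, (b : nat)%:R))
          = alg h a * (K * q * \sum_(b : bool) bernoulli (nu a) b *
              bandit_cost nu (indic S) t (rcons h (a, (b : nat)%:R))).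
    by rewrite !mulr_sumr; apply: eq_bigr => b _; ring.
  rewrite -mulr_sumr !mulrDr addrA lerD2r -mulrDr.
  by rewrite ler_wpM2l // phi_step.
apply: le_trans (ler_sum _ (fun a _ => step a)) _.
rewrite sum_prob_addl // mulr_sumr.
by under eq_bigr do rewrite mulrCA.
Qed.

Lemma needle_pulls_gap S e t h : 0 <= e <= 1/4 ->
  bandit_cost (needle S e) (indic S) t h - bandit_cost (fun=> 1/2) (indic S) t h
  <= 64 * t%:R * e ^+ 2 * bandit_cost (fun=> 1/2) (indic S) t h
     + (bandit_cost (needle S e) (indic S) t h + bandit_cost (fun=> 1/2) (indic S) t h) / 8.
Proof.
move=> /andP[e_ge0 e_le].
set X := bandit_cost _ _ t h; set Y := bandit_cost _ _ t h.
have needle01 a : 0 <= needle S e a <= 1.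
  by rewrite /needle; case: (S a); apply/andP; split; lra.
have half01 : 0 <= (1/2 : R) <= 1 by apply/andP; split; lra.
(* [X - Y] sums [(p - q) n] over the histories; bound each term by [sub_le_trid]
   and the summed discrimination by [hist_sum_div_le]. *)
pose hs := hist_sum (needle S e) (fun=> 1/2) S t h 1 1 0.
have gapE : hs (fun p q n => 1 * (p * n%:R) + (-1) * (q * n%:R)) = X - Y.
  rewrite /hs hist_sum_lin hist_sum_count hist_sum_count_r.
  by rewrite /X /Y; ring.
have divY : hs (fun p q _ => trid p q) <= 32 * e ^+ 2 * Y.
  have := @hist_sum_div_le (@trid R) (32 * e ^+ 2) _ _ S t h 1 1 0 needle01 (fun=> half01).
  rewrite tridxx add0r mulr1; apply=> //; first by rewrite mulr_ge0 ?sqr_ge0.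
    by move=> k x y _; apply: trid_scale.
  move=> p q a p_ge0 q_ge0; rewrite /needle /indic.
  case: (S a); first by rewrite mulr1 trid_bernoulli_step ?e_ge0.
  rewrite mulr0 addr0 big_bool /= ![p * _]mulrC ![q * _]mulrC !trid_scale.
  by rewrite -mulrDl addrC subrK mul1r.
have upper : hs (fun p q n => 2 * t%:R * trid p q + 1/8 * (1 * (p * n%:R) + 1 * (q * n%:R)))
             <= 64 * t%:R * e ^+ 2 * Y + (X + Y) / 8.
  rewrite /hs !hist_sum_lin hist_sum_count hist_sum_count_r -/hs -/X -/Y.
  have t2_ge0 : 0 <= 2 * t%:R :> R by rewrite mulr_ge0 ?ler0n.
  by have := ler_wpM2l t2_ge0 divY; lra.
rewrite -gapE; apply: le_trans upper; apply: ler_hist_sum => // p q m p_ge0 q_ge0.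
rewrite add0n -(ler_nat R) => m_le.
have := ler_wpM2r (ler0n R m) (sub_le_trid p_ge0 q_ge0).
have := ler_wpM2l (trid_ge0 p_ge0 q_ge0) m_le.
lra.
Qed.

Lemma needle_haystack (C : finType) (S : C -> pred P) e t h :
  (forall a, \sum_c indic (S c) a = 1 :> R) -> (2 <= #|C|)%N ->
  0 <= e <= 1/4 -> t%:R * e ^+ 2 <= #|C|%:R / 512 ->
  exists c, bandit_cost (needle (S c) e) (indic (S c)) t h <= 11/14 * t%:R.
Proof.
move=> S_partition C_ge2 e01 te2_le.
have sumY : \sum_c bandit_cost (fun=> 1/2) (indic (S c)) t h = t%:R.
  rewrite -bandit_cost_sum (eq_bandit_cost _ _ _ S_partition).
  by rewrite bandit_cost_const mul1r.
have gap c : 7/8 * bandit_cost (needle (S c) e) (indic (S c)) t h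
             <= (9/8 + 64 * (t%:R * e ^+ 2)) * bandit_cost (fun=> 1/2) (indic (S c)) t h.
  by have := needle_pulls_gap (S c) t h e01; lra.
apply: exists_le_mean; first exact: ltnW.
have C_ge2R : 2 <= #|C|%:R :> R by rewrite (ler_nat R 2).
have : \sum_c 7/8 * bandit_cost (needle (S c) e) (indic (S c)) t h
       <= \sum_c (9/8 + 64 * (t%:R * e ^+ 2)) * bandit_cost (fun=> 1/2) (indic (S c)) t h.
  by apply: ler_sum => c _; apply: gap.
rewrite -!mulr_sumr sumY.
have := ler_wpM2r (ler0n R t) te2_le.
have := ler_wpM2r (ler0n R t) C_ge2R.
lra.
Qed.

End BernoulliBandit.

Lemma val_ord_pred n (j : 'I_n) : (0 < j)%N -> val (ord_pred j) = j.-1.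
Proof. by case: j => [[|j] lt_jn] //= _; rewrite modnDr modn_small // ltnW. Qed.

Lemma sum_conv (R : realType) (d1 d2 : seq (R * R)) (G : R -> R) :
  \sum_(z <- conv d1 d2) z.2 * G z.1
  = \sum_(x <- d1) x.2 * \sum_(y <- d2) y.2 * G (x.1 + y.1).
Proof.
rewrite /conv big_allpairs_dep /=; apply: eq_bigr => x _; rewrite mulr_sumr.
by apply: eq_bigr => y _; rewrite mulrA.
Qed.

Section NeedleMDP.
Variables (R : realType) (H A : nat).
Hypothesis H_gt0 : (0 < H)%N.
Variables (sec : {ffun 'I_H -> 'I_A}) (e : R).
Hypotheses (e_ge0 : 0 <= e) (e_le_half : e <= 1/2).

Definition last_stage : 'I_H := Ordinal (etrans (ltn_predL H) H_gt0).

Definition on_secret (l : 'I_2) (i : 'I_H) (a : 'I_A) : bool := (l == ord0) && (a == sec i).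

Definition next_level l i a : 'I_2 := if on_secret l i a then ord0 else ord_max.

Definition reward_mean l i a : R := if on_secret l i a then 1/2 + e else 1/2.

Definition needle_mdp : mdp R H A :=
  Mdp (fun i l a s => (s == next_level l i a : nat)%:R)
      (fun l i a => if i == last_stage
                    then [:: (1, reward_mean l i a); (0, 1 - reward_mean l i a)]
                    else [:: (0, 1)]).

Lemma valid_needle_mdp : valid_mdp needle_mdp.
Proof.
have mean01 l i a : 0 <= reward_mean l i a <= 1.
  by rewrite /reward_mean; case: ifP => _; apply/andP; split; move: e_ge0 e_le_half; lra.
split => /=.
- by move=> *; rewrite ler0n.
- move=> i l a; rewrite (bigD1 (next_level l i a)) //= eqxx big1 ?addr0 //.
  by move=> s /negbTE ->.
- move=> l i a; case: ifP => _ /=; rewrite ?ler01 ?lexx //.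
  by case/andP: (mean01 l i a) => -> mean_le1; rewrite subr_ge0 mean_le1.
- by move=> l i a; case: ifP => _; rewrite !big_cons big_nil /=; ring.
move=> path acts x x_rew.
have x0 i : i != last_stage -> (x i).1 = 0.
  by move=> /negbTE i_last; move: (x_rew i); rewrite /= i_last inE => /eqP ->.
rewrite (bigD1 last_stage) //= big1 ?addr0; last by move=> i /x0.
by move: (x_rew last_stage); rewrite /= eqxx !inE => /orP[] /eqP -> /=; rewrite ?lexx ?ler01.
Qed.

Lemma sum_foldr_rew (pi : policy H A) (path : {ffun 'I_H -> 'I_2}) (s : seq 'I_H)
    (G : R -> R) : uniq s ->
  \sum_(z <- foldr (fun i acc => conv (rew needle_mdp (path i) i (pi (path i, i))) acc)
                   [:: (0, 1)] s) z.2 * G z.1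
  = if last_stage \in s then
      \sum_(b : bool) bernoulli (reward_mean (path last_stage) last_stage
                                 (pi (path last_stage, last_stage))) b * G (b : nat)%:R
    else G 0.
Proof.
elim: s G => [|i s IH] G /=; first by rewrite big_cons big_nil mul1r addr0.
case/andP=> i_notin s_uniq; rewrite sum_conv inE.
have [i_last|i_not_last] := eqVneq i last_stage; last first.
  rewrite big_cons big_nil /= mul1r addr0 (IH (fun v => G (0 + v))) //=.
  by case: ifP => _; [under eq_bigr do rewrite add0r | rewrite addr0].
move: i_notin; rewrite i_last => last_notin.
rewrite !big_cons big_nil /= addr0.
rewrite (IH (fun v => G (1 + v))) // (IH (fun v => G (0 + v))) // (negbTE last_notin).
by rewrite big_bool /= !addr0.
Qed.

Definition follows (pi : policy H A) : bool := [forall i, pi (ord0, i) == sec i].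

Definition follows_before (pi : policy H A) (j : nat) : bool :=
  [forall i : 'I_H, (i < j)%N ==> (pi (ord0, i) == sec i)].

Definition track (pi : policy H A) : {ffun 'I_H -> 'I_2} :=
  [ffun j : 'I_H => if follows_before pi j then ord0 else ord_max].

Lemma follows_before0 pi : follows_before pi 0.
Proof. by apply/forallP. Qed.

Lemma follows_beforeS pi (i : 'I_H) :
  follows_before pi i.+1 = follows_before pi i && (pi (ord0, i) == sec i).
Proof.
apply/forallP/andP => [before_i1 | [/forallP before_i sec_i] k].
  split; last exact: (implyP (before_i1 i)) (ltnSn i).
  by apply/forallP => k; apply/implyP => k_lt; apply: (implyP (before_i1 k)); rewrite ltnW.
apply/implyP; rewrite ltnS leq_eqVlt => /orP[/eqP k_i | k_lt].
  by rewrite (val_inj k_i).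
exact: (implyP (before_i k)) k_lt.
Qed.

Lemma follows_beforeH pi : follows pi = follows_before pi H.
Proof.
apply/forallP/forallP => [fol k | before k]; first by apply/implyP.
exact: (implyP (before k)) (ltn_ord k).
Qed.

Lemma track_succ pi (j : 'I_H) : (0 < j)%N ->
  track pi j = next_level (track pi (ord_pred j)) (ord_pred j)
                          (pi (track pi (ord_pred j), ord_pred j)).
Proof.
move=> j_gt0; rewrite /next_level /on_secret !ffunE.
have -> : (j : nat) = (ord_pred j).+1 by rewrite val_ord_pred // prednK.
by rewrite follows_beforeS; case: (follows_before pi _) => //=; rewrite eqxx.
Qed.

Lemma path_prob_track pi : path_prob needle_mdp pi (track pi) = 1.
Proof.
rewrite /path_prob big1 // => j _; case: ifP => [/eqP j0 | /negbT j_neq0].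
  by rewrite ffunE j0 follows_before0 eqxx.
by rewrite /= -track_succ ?eqxx // lt0n.
Qed.

Lemma path_prob_off_track pi path : path != track pi -> path_prob needle_mdp pi path = 0.
Proof.
move=> off.
have /existsP[k off_k] : [exists j, path j != track pi j].
  by apply: contraR off => /existsPn on; apply/eqP/ffunP => j; apply/eqP/negPn/on.
case: (@arg_minnP _ k (fun j => path j != track pi j) (fun j : 'I_H => nat_of_ord j) off_k).
move=> j off_j j_min.
rewrite /path_prob (bigD1 j) //= [X in X * _](_ : _ = 0) ?mul0r //.
case: ifP => [/eqP j0 | /negbT j_neq0].
  by move: off_j; rewrite ffunE j0 follows_before0 => /negbTE ->.
have on_pred : path (ord_pred j) = track pi (ord_pred j).
  apply/eqP; apply: contraT => /j_min.
  by rewrite val_ord_pred ?lt0n // leqNgt ltn_predL lt0n j_neq0.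
by rewrite /= on_pred -track_succ ?lt0n // (negbTE off_j).
Qed.

Lemma reward_mean_track pi :
  reward_mean (track pi last_stage) last_stage (pi (track pi last_stage, last_stage))
  = needle follows e pi.
Proof.
rewrite /reward_mean /on_secret /needle follows_beforeH.
have -> : follows_before pi H = follows_before pi last_stage.+1 by rewrite /= prednK.
rewrite follows_beforeS ffunE.
by case: (follows_before pi last_stage) => //=; rewrite eqxx.
Qed.

Lemma sum_episode_dist pi (F : R -> R) :
  \sum_(x <- episode_dist needle_mdp pi) x.2 * F x.1
  = \sum_(b : bool) bernoulli (needle follows e pi) b * F (b : nat)%:R.
Proof.
rewrite /episode_dist big_flatten /= big_map.
transitivity (\sum_(path <- enum {: {ffun 'I_H -> 'I_2}}) path_prob needle_mdp pi path *
   \sum_(b : bool) bernoulli (reward_mean (path last_stage) last_stage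
                                (pi (path last_stage, last_stage))) b * F (b : nat)%:R).
  apply: eq_bigr => path _.
  have := sum_foldr_rew pi path F (enum_uniq 'I_H); rewrite mem_enum inE => <-.
  by rewrite big_map mulr_sumr; apply: eq_bigr => x _; rewrite mulrA.
rewrite big_enum /= (bigD1 (track pi)) //= path_prob_track mul1r reward_mean_track.
by rewrite [X in _ + X]big1 ?addr0 // => path off; rewrite path_prob_off_track ?mul0r.
Qed.

Lemma value_needle_mdp pi : value needle_mdp pi = needle follows e pi.
Proof.
rewrite /value (eq_bigr _ (fun x _ => mulrC x.1 x.2)) (sum_episode_dist pi id).
by rewrite big_bool /=; ring.
Qed.

Lemma Opt_needle_mdp : Opt needle_mdp = 1/2 + e.
Proof.
apply/eqP; rewrite eq_le; apply/andP; split.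
  apply: bigmax_le => [|pi _]; first by move: e_ge0; lra.
  by rewrite value_needle_mdp /needle; case: ifP => _; move: e_ge0; lra.
pose pi_sec : policy H A := [ffun x => sec x.2].
have <- : value needle_mdp pi_sec = 1/2 + e.
  by rewrite value_needle_mdp /needle (_ : follows _ = true) //; apply/forallP => i; rewrite ffunE.
exact: le_bigmax.
Qed.

Lemma exp_regret_needle_mdp (alg : algorithm R H A) t h :
  (forall h, \sum_pi alg h pi = 1) ->
  exp_regret needle_mdp alg t h
  = e * (t%:R - bandit_cost alg (needle follows e) (indic follows) t h).
Proof.
move=> alg_sum1.
have -> : exp_regret needle_mdp alg t h
          = bandit_cost alg (needle follows e) (fun pi => e + (- e) * indic follows pi) t h.
  elim: t h => [|t IH] h //=; apply: eq_bigr => pi _; congr (_ * (_ + _)).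
    by rewrite Opt_needle_mdp value_needle_mdp /needle /indic; case: (follows pi) => /=; ring.
  rewrite (sum_episode_dist pi (fun v => exp_regret needle_mdp alg t (rcons h (pi, v)))).
  by apply: eq_bigr => b _; rewrite IH.
by rewrite bandit_cost_affine //; ring.
Qed.

End NeedleMDP.

Lemma sum_indic_follows (R : realType) (H A : nat) (pi : policy H A) :
  \sum_(s : {ffun 'I_H -> 'I_A}) indic (follows s) pi = 1 :> R.
Proof.
pose s_pi : {ffun 'I_H -> 'I_A} := [ffun i => pi (ord0, i)].
rewrite (bigD1 s_pi) //= big1 ?addr0 => [|s s_neq].
  by rewrite /indic (_ : follows _ _ = true) //; apply/forallP => i; rewrite ffunE.
rewrite /indic (_ : follows _ _ = false) //; apply/negbTE; apply: contra s_neq.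
by move=> /forallP fol; apply/eqP/ffunP => i; rewrite ffunE (eqP (fol i)).
Qed.

Lemma gap_choice (R : realType) (N : R) (T : nat) : 0 <= N ->
  exists e : R, [/\ 0 <= e <= 1/4, T%:R * e ^+ 2 <= N / 512
                  & Num.min (Num.sqrt (N * T%:R)) T%:R <= 23 * (e * T%:R)].
Proof.
move=> N_ge0; have [->|T_gt0] := posnP T.
  exists 0; split; first by apply/andP; split; lra.
    by rewrite expr0n mulr0 divr_ge0.
  by rewrite !mulr0 sqrtr0 minxx.
have T_gt0' : 0 < T%:R :> R by rewrite ltr0n.
set e2 := Num.min (1/16) (N / (512 * T%:R)).
have e2_ge0 : 0 <= e2.
  by rewrite le_min; apply/andP; split; [lra | rewrite divr_ge0 ?mulr_ge0 ?ler0n].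
exists (Num.sqrt e2); have e2E := sqr_sqrtr e2_ge0; set e := Num.sqrt e2.
have e_ge0 : 0 <= e := sqrtr_ge0 _.
split.
- have : e ^+ 2 <= 1/16 by rewrite e2E ge_min lexx.
  by rewrite e_ge0 /=; move: e_ge0; rewrite expr2; nra.
- have e2_le : e2 <= N / (512 * T%:R) by rewrite ge_min lexx orbT.
  rewrite e2E (le_trans (ler_wpM2l (ltW T_gt0') e2_le)) //.
  have -> : T%:R * (N / (512 * T%:R)) = N / 512 by field; rewrite gt_eqF.
  exact: lexx.
- set m := Num.min _ _.
  have m_ge0 : 0 <= m by rewrite le_min sqrtr_ge0 ler0n.
  have NT_ge0 : 0 <= N * T%:R by rewrite mulr_ge0 ?ler0n.
  (* [m ^+ 2 <= 512 * (e * T) ^+ 2], and [23 ^ 2 = 529 >= 512] *)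
  have : m ^+ 2 <= 529 * (e ^+ 2 * T%:R ^+ 2).
    rewrite e2E /e2 minEle; case: ifP => _.
      have : m <= T%:R by rewrite ge_min lexx orbT.
      by rewrite !expr2; nra.
    have : m ^+ 2 <= N * T%:R.
      rewrite -(sqr_sqrtr NT_ge0) !expr2.
      have : m <= Num.sqrt (N * T%:R) by rewrite ge_min lexx.
      by have := sqrtr_ge0 (N * T%:R); nra.
    have -> : N / (512 * T%:R) * T%:R ^+ 2 = N * T%:R / 512 by field; rewrite gt_eqF.
    lra.
  have eT_ge0 : 0 <= e * T%:R by rewrite mulr_ge0 ?ler0n.
  by rewrite !expr2; nra.
Qed.

Theorem theorem3 :
  forall R : realType, exists c : R, 0 < c /\
    forall (H A T : nat), (0 < H)%N -> (1 < A)%N ->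
    forall alg : algorithm R H A, valid_alg alg ->
    exists M : mdp R H A, valid_mdp M /\
      c * Num.min (Num.sqrt ((A ^ H * T)%N%:R)) T%:R <= exp_regret M alg T [::].
Proof.
move=> R; exists (1/120); split=> [|H A T H_gt0 A_gt1 alg alg_valid]; first lra.
have alg_ge0 h pi : 0 <= alg h pi by case: (alg_valid h).
have alg_sum1 h : \sum_pi alg h pi = 1 by case: (alg_valid h).
have card_secrets : #|{ffun 'I_H -> 'I_A}| = (A ^ H)%N by rewrite card_ffun !card_ord.
have secrets_ge2 : (2 <= #|{ffun 'I_H -> 'I_A}|)%N.
  by rewrite card_secrets (leq_trans A_gt1) // -{1}(expn1 A) leq_pexp2l // ltnW.
have [e [e01 Te2_le min_le]] := gap_choice T (ler0n R #|{ffun 'I_H -> 'I_A}|).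
have [s pulls_le] :=
  needle_haystack alg_ge0 alg_sum1 [::] (@sum_indic_follows R H A) secrets_ge2 e01 Te2_le.
case/andP: e01 => e_ge0 e_le.
exists (needle_mdp H_gt0 s e); split; first by apply: valid_needle_mdp; lra.
rewrite exp_regret_needle_mdp // natrM -card_secrets.
have := ler_wpM2l e_ge0 pulls_le.
have : 0 <= e * T%:R by rewrite mulr_ge0.
lra.
Qed.
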